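(* Let $\mathbf{w} = (\omega_k)_{k\geq 1}$ be a bounded sequence of strictly positive real numbers such that $$\sup_{n \geq 1} \inf_{k \geq 1} \prod_{j=1}^n \omega_{k+j} \leq 1.$$ Then there exists $\beta \geq 1$ such that for every $N \in \mathbb{N}$ the set $$\mathcal{A}^{\mathbf{w}}_{N,\beta} = \Big\{ k \in \mathbb{N} : \max_{k < u \leq k+N} \prod_{j=u}^{k+N} \omega_j \leq \beta \Big\}$$ is infinite. *)

From HB Require Import structures.
From mathcomp Require Import all_boot all_order all_algebra.
From mathcomp Require Import all_classical all_reals.
Set Implicit Arguments. Unset Strict Implicit. Unset Printing Implicit Defensive.
Import Order.TTheory GRing.Theory Num.Theory.
Local Open Scope ring_scope.
Local Open Scope classical_set_scope.

(* The weight sequence w is indexed by k >= 1; the value w 0 is ignored. *)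

Definition inf_block {R : realType} (w : nat -> R) (n : nat) : R :=
  inf [set (\prod_(1 <= j < n.+1) w (k + j)%N) | k in [set k : nat | (1 <= k)%N]].

(* max_{k < u <= k+N} prod_{j=u}^{k+N} w_j  (empty max := 0, only for N = 0) *)
Definition tail_max {R : realType} (w : nat -> R) (N k : nat) : R :=
  \big[Num.max/0]_(k.+1 <= u < (k + N).+1) \prod_(u <= j < (k + N).+1) w j.

Definition Aset {R : realType} (w : nat -> R) (N : nat) (beta : R) : set nat :=
  [set k : nat | (1 <= k)%N /\ tail_max w N k <= beta].

(* Take beta = 2 and suppose A_{N,2} finite. Then every late enough e has a
   suffix ]t, e] of length at most N with product > 2; chaining these suffixes
   backwards shows that the product over ]a, e] is at least 2^((e-a)/N) up to
   the factor M^N lost at the last junction, M a bound of w. With a positive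
   lower bound of w on the finitely many early indices, every window ]k, k+n]
   has product at least c 2^(n/N) for some c > 0, whereas by hypothesis some
   window of each length has product below 2. *)

From HB Require Import structures.
From mathcomp Require Import all_boot all_order all_algebra.
From mathcomp Require Import all_classical all_reals.
From mathcomp Require Import zify.
Import Order.TTheory GRing.Theory Num.Theory.
Local Open Scope ring_scope.
Local Open Scope classical_set_scope.

Definition prod_oc {R : pzSemiRingType} (w : nat -> R) (a e : nat) : R :=
  \prod_(a.+1 <= i < e.+1) w i.

Lemma prod_oc_id (R : pzSemiRingType) (w : nat -> R) a : prod_oc w a a = 1.
Proof. by rewrite /prod_oc big_geq. Qed.

Lemma prod_oc_cat (R : pzSemiRingType) (w : nat -> R) a t e :
  (a <= t <= e)%N -> prod_oc w a e = prod_oc w a t * prod_oc w t e.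
Proof. by move=> /andP[a_le_t t_le_e]; rewrite /prod_oc (big_cat_nat _ (n := t.+1)). Qed.

Lemma finite_set_nat_lt (A : set nat) :
  finite_set A -> exists T, forall k, A k -> (k < T)%N.
Proof.
move=> /finite_fsetP[X ->]; exists (\max_(x <- finmap.enum_fset X) x).+1.
by move=> k Xk; rewrite ltnS; apply: leq_bigmax_seq.
Qed.

Section PositiveWeights.
Variables (R : realDomainType) (w : nat -> R).
Hypothesis wpos : forall k, (1 <= k)%N -> 0 < w k.

Lemma prod_oc_gt0 a e : 0 < prod_oc w a e.
Proof.
rewrite /prod_oc big_nat_cond; apply: prodr_gt0 => i /andP[/andP[ai _] _].
exact: wpos (leq_trans (ltn0Sn a) ai).
Qed.

Lemma prod_oc_le_expn (M : R) N a e :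
  1 <= M -> (forall k, (1 <= k)%N -> w k <= M) -> (e - a <= N)%N ->
  prod_oc w a e <= M ^+ N.
Proof.
move=> M_ge1 wM eaN; apply: (@le_trans _ _ (M ^+ (e.+1 - a.+1))).
  rewrite -prodr_const_nat /prod_oc big_nat_cond [leRHS]big_nat_cond.
  apply: ler_prod => i /andP[/andP[ai _] _].
  by rewrite ltW ?wM ?wpos //; apply: leq_trans ai.
by apply: ler_weXn2l => //; rewrite subSS.
Qed.

Lemma prefix_lower_bound T :
  exists2 m : R, 0 < m <= 1 & forall k, (1 <= k <= T)%N -> m <= w k.
Proof.
elim: T => [|T [m /andP[m_gt0 m_le1] wm]].
  by exists 1 => [|k]; [rewrite ltr01 lexx | lia].
exists (Num.min m (w T.+1)); first by rewrite lt_min m_gt0 wpos //= ge_min m_le1.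
move=> k /andP[k_ge1]; rewrite leq_eqVlt ltnS ge_min => /predU1P[->|kT].
  by rewrite lexx orbT.
by rewrite wm ?k_ge1.
Qed.

End PositiveWeights.

Lemma prod_oc_ge_expn (R : numDomainType) (w : nat -> R) (m : R) N a e :
  0 <= m <= 1 -> (forall k, (a < k <= e)%N -> m <= w k) -> (e - a <= N)%N ->
  m ^+ N <= prod_oc w a e.
Proof.
move=> /andP[m_ge0 m_le1] wm eaN; apply: (@le_trans _ _ (m ^+ (e.+1 - a.+1))).
  by apply: ler_wiXn2l => //; rewrite subSS.
rewrite -prodr_const_nat /prod_oc big_nat_cond [leRHS]big_nat_cond.
by apply: ler_prod => i /andP[/andP[ai ie] _]; rewrite m_ge0 wm ?ai.
Qed.

Lemma not_Aset_jump (R : realType) (w : nat -> R) N k (beta : R) :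
  0 <= beta -> (1 <= k)%N -> ~ Aset w N beta k ->
  exists2 t, (k <= t < k + N)%N & beta < prod_oc w t (k + N).
Proof.
move=> beta_ge0 k_ge1; apply: contra_notP => no_jump; split => //.
rewrite /tail_max big_nat_cond; apply: bigmax_le => // u /andP[/andP[ku uN] _].
rewrite leNgt; apply/negP => beta_lt; apply: no_jump; exists u.-1.
  by rewrite -ltnS prednK //; lia.
by rewrite /prod_oc prednK //; lia.
Qed.

Lemma finite_Aset_jump (R : realType) (w : nat -> R) N (beta : R) :
  0 <= beta -> finite_set (Aset w N beta) -> exists E, forall e, (E <= e)%N ->
  exists2 t, (e - N <= t < e)%N & beta < prod_oc w t e.
Proof.
move=> beta_ge0 /finite_set_nat_lt[T A_lt_T]; exists (T.+1 + N)%N => e Ee.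
have := @not_Aset_jump _ w N (e - N) beta beta_ge0; rewrite subnK; last by lia.
by apply; [lia | move/A_lt_T; lia].
Qed.

Lemma exists_expn2_gt (R : archiNumDomainType) (C : R) :
  0 <= C -> exists q : nat, C < 2 ^+ q.
Proof.
move=> C_ge0; exists (Num.Def.archi_bound C).
apply: lt_le_trans (archi_boundP C_ge0) _.
by rewrite -natrX ler_nat ltnW // ltn_expl.
Qed.

Lemma inf_block_lt (R : realType) (w : nat -> R) n (beta : R) :
  inf_block w n < beta -> exists2 k, (1 <= k)%N & prod_oc w k (k + n) < beta.
Proof.
case/inf_lt; first by eexists; exists 1%N.
move=> _ [k k_ge1 <-] small; exists k => //.
rewrite /prod_oc -add1n big_addn (_ : ((k + n).+1 - k = n.+1)%N); last lia.
by under eq_bigr do rewrite addnC.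
Qed.

Section Growth.
Variables (R : realDomainType) (w : nat -> R) (N E : nat) (beta : R).
Hypotheses (wpos : forall k, (1 <= k)%N -> 0 < w k) (beta_ge1 : 1 <= beta).
Hypothesis jump :
  forall e, (E <= e)%N -> exists2 t, (e - N <= t < e)%N & beta < prod_oc w t e.

Lemma prod_oc_growth a e : (E <= a <= e)%N ->
  exists2 t, (a - N <= t <= a)%N & beta ^+ ((e - a) %/ N) <= prod_oc w t e.
Proof.
move=> /andP[Ea]; elim/ltn_ind: e => e IH.
rewrite leq_eqVlt => /predU1P[<-|a_lt_e].
  by exists a; rewrite ?leq_subr ?leqnn // subnn div0n expr0 prod_oc_id.
have beta_ge0 : 0 <= beta by apply: le_trans beta_ge1.
have [t' /andP[t'_ge t'_lt] beta_lt] := jump _ (leq_trans Ea (ltnW a_lt_e)).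
have [t'_lt_a | a_le_t'] := ltnP t' a.
  exists t'; first lia.
  apply: le_trans (ltW beta_lt); rewrite -[leRHS]expr1.
  by apply: ler_weXn2l => //; nia.
have [t t_range growth] := IH t' t'_lt a_le_t'.
have /andP[_ t_le_a] := t_range.
exists t => //; rewrite (@prod_oc_cat _ _ t t'); last first.
  by rewrite (leq_trans t_le_a a_le_t') ltnW.
apply: le_trans (ler_pM _ _ growth (ltW beta_lt)); rewrite ?exprn_ge0 // -exprSr.
by apply: ler_weXn2l => //; nia.
Qed.

Variables (M m : R).
Hypotheses (M_ge1 : 1 <= M) (wM : forall k, (1 <= k)%N -> w k <= M).
Hypotheses (m_range : 0 <= m <= 1) (wm : forall k, (1 <= k <= E)%N -> m <= w k).

Lemma expn_le_prod_oc a e : (E <= a <= e)%N ->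
  beta ^+ ((e - a) %/ N) <= M ^+ N * prod_oc w a e.
Proof.
move=> a_range; have [t /andP[t_ge t_le_a] growth] := prod_oc_growth _ _ a_range.
apply: le_trans growth _; rewrite (@prod_oc_cat _ _ t a) ?t_le_a //; last by case/andP: a_range.
apply: ler_wpM2r; first exact/ltW/prod_oc_gt0.
by apply: prod_oc_le_expn => //; lia.
Qed.

Lemma expn_le_prod_oc_from k e : (k + E <= e)%N ->
  m ^+ E * beta ^+ ((e - k - E) %/ N) <= M ^+ N * prod_oc w k e.
Proof.
move=> kEe; rewrite (@prod_oc_cat _ _ k (maxn k E)); last by rewrite leq_maxl; lia.
rewrite mulrCA; apply: ler_pM.
- by apply: exprn_ge0; case/andP: m_range.
- by apply: exprn_ge0; apply: le_trans beta_ge1.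
- by apply: prod_oc_ge_expn => [|j ?|]; [exact: m_range | apply: wm; lia | lia].
apply: le_trans (expn_le_prod_oc _ _ _); last by rewrite leq_maxr; lia.
by apply: ler_weXn2l => //; apply: leq_div2r; lia.
Qed.

End Growth.

Theorem lemma2p4 (R : realType) (w : nat -> R)
  (wpos : forall k : nat, (1 <= k)%N -> 0 < w k)
  (wbnd : exists M : R, forall k : nat, (1 <= k)%N -> w k <= M)
  (hsup : forall n : nat, (1 <= n)%N -> inf_block w n <= 1) :
  exists beta : R, 1 <= beta /\
    forall N : nat, infinite_set (Aset w N beta).
Proof.
have [M wM] := wbnd; set M' := Num.max 1 M.
have M'_ge1 : 1 <= M' by rewrite le_max lexx.
have wM' k : (1 <= k)%N -> w k <= M' by move=> /wM; rewrite le_max orbC => ->.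
exists 2; split => [|N]; first by rewrite ler1n.
move=> /(@finite_Aset_jump _ w N 2 (ler0n _ 2))[E jump].
have [N_gt0 E_gt0] : (0 < N)%N /\ (0 < E)%N by have [t] := jump E (leqnn E); lia.
have [m /andP[m_gt0 m_le1] wm] := @prefix_lower_bound _ _ wpos E.
have m_range : 0 <= m <= 1 by rewrite ltW.
have MN_gt0 : 0 < M' ^+ N by rewrite exprn_gt0 // (lt_le_trans ltr01).
have [q q_large] : exists q : nat, M' ^+ N * 2 / m ^+ E < 2 ^+ q.
  by apply: exists_expn2_gt; rewrite ltW // divr_gt0 ?exprn_gt0 // mulr_gt0.
rewrite ltr_pdivrMr ?exprn_gt0 // in q_large.
have [k k_ge1 small] : exists2 k, (1 <= k)%N & prod_oc w k (k + (E + q * N)) < 2.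
  by apply: inf_block_lt; apply: le_lt_trans (hsup _ _) _; rewrite ?ltr1n //; lia.
have := @expn_le_prod_oc_from _ w N E 2 wpos (ler1n _ 2) jump M' m M'_ge1 wM'
  m_range wm k (k + (E + q * N)) ltac:(lia).
rewrite (_ : (k + (E + q * N) - k - E = q * N)%N) ?mulnK //; last by lia.
move/le_lt_trans => /(_ (M' ^+ N * 2)); rewrite ltr_pM2l // mulrC => /(_ small).
by rewrite ltNge ltW.
Qed.
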